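(* Let $C$ be a real random variable satisfying \[ C \overset{d}{=} U_{(1)}\mathbf 1_{\{V<U_{(1)}\}}\,C^{(1)} + (U_{(2)}-U_{(1)})\mathbf 1_{\{U_{(1)}<V<U_{(2)}\}}\,C^{(2)} + (1-U_{(2)})\mathbf 1_{\{V>U_{(2)}\}}\,C^{(3)} + 1 + U_{(2)}\bigl(2-U_{(1)}-U_{(2)}\bigr), \] where $C^{(1)},C^{(2)},C^{(3)}$ are independent copies of $C$, independent of $(U_1,U_2,V)$. Then $C$ also satisfies \[ C \overset{d}{=} X^*\,C' + g(X^*,W^* ), \] where $C'$ is a copy of $C$ independent of $(X^*,W^*,J)$.
   Context: $U_1,U_2,V$ are independent uniform on $(0,1)$; $U_{(1)}=\min\{U_1,U_2\}$, $U_{(2)}=\max\{U_1,U_2\}$. $(X^*,W^* )$ has joint density $f(x,w)=6x$ for $0<x<w<1$ and $0$ elsewhere. $J$ is uniform on $\{1,2,3\}$ and independent of $(X^*,W^* )$; $g(X^*,W^* )=h_J(X^*,W^* )$ with $h_1(x,w)=1+w(2-x-w)$, $h_2(x,w)=1+(1+x-w)(2w-x)$, $h_3(x,w)=1+(1-x)(x+w)$. *)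

From HB Require Import structures.
From mathcomp Require Import all_boot all_order all_algebra.
From mathcomp Require Import all_classical all_reals all_analysis.
Set Implicit Arguments. Unset Strict Implicit. Unset Printing Implicit Defensive.
Import Order.TTheory GRing.Theory Num.Theory.
Local Open Scope classical_set_scope.
Local Open Scope ring_scope.

Section defs.
Variable R : realType.

Definition ind (b : bool) : R := if b then 1 else 0.

Definition rhs1 (u1 u2 v c1 c2 c3 : R) : R :=
  let m := Num.min u1 u2 in
  let M := Num.max u1 u2 in
  m * ind (v < m) * c1
  + (M - m) * ind ((m < v) && (v < M)) * c2
  + (1 - M) * ind (M < v) * c3
  + 1 + M * (2 - m - M).

Definition h (j : 'I_3) (x w : R) : R :=
  match val j with
  | O => 1 + w * (2 - x - w)
  | S O => 1 + (1 + x - w) * (2 * w - x)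
  | _ => 1 + (1 - x) * (x + w)
  end.

Definition fXW (x w : R) : R := 6 * x * ind ((0 < x) && (x < w) && (w < 1)).

Definition Eunif (F : R -> \bar R) : \bar R :=
  (\int[lebesgue_measure]_(u in `]0%R, 1%R[) F u)%E.

(* law (P(. \in A)) of the right-hand side of the first equation, where
   U1, U2, V are iid uniform(0,1) and C1, C2, C3 are iid with law mu,
   independent of (U1,U2,V): integral against the product law *)
Definition law_rhs1 (mu : probability (measurableTypeR R) R)
    (A : set (measurableTypeR R)) : \bar R :=
  Eunif (fun u1 => Eunif (fun u2 => Eunif (fun v =>
    (\int[mu]_c1 \int[mu]_c2 \int[mu]_c3
       (\1_A (rhs1 u1 u2 v c1 c2 c3))%:E)%E))).

(* law of  Xs * C' + h_J(Xs, Ws)  where the pair (Xs, Ws) has density fXW,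
   J is uniform on {1,2,3} (here indexed 0,1,2), C' has law mu,
   all independent *)
Definition law_rhs2 (mu : probability (measurableTypeR R) R)
    (A : set (measurableTypeR R)) : \bar R :=
  (\sum_(j < 3) (3^-1)%:E *
     \int[lebesgue_measure]_x \int[lebesgue_measure]_w
       ((fXW x w)%:E * \int[mu]_c (\1_A (x * c + h j x w))%:E))%E.

End defs.

From HB Require Import structures.
From mathcomp Require Import all_boot all_order all_algebra.
From mathcomp Require Import all_classical all_reals all_analysis.
From mathcomp Require Import measurable_realfun.
From mathcomp Require Import ring lra.

(* Write F(a, b) = P(a C + b \in A).  Given (U1, U2, V) exactly one copy C^(i)
   enters the first right-hand side, and integrating V out leaves
   sum_k S_k F(S_k, h_1(U_(1), U_(2))), where S_1 = U_(1), S_2 = U_(2) - U_(1)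
   and S_3 = 1 - U_(2) are the spacings of the two uniforms.  The order
   statistics have density 2 on the simplex 0 < x < y < 1.  The Lebesgue
   measure preserving maps (x, w) |-> (1 - w, x + 1 - w) and
   (x, w) |-> (1 - w, 1 - x) send the simplex onto itself and turn S_2,
   resp. S_3, into x and h_1 into h_2, resp. h_3.  Hence the k-th term is
   2 \int\int_simplex x F(x, h_k(x, w)), which is 1/3 of the expectation of
   F(Xs, h_k(Xs, Ws)) since (Xs, Ws) has density 6x on the simplex; summing
   over k gives the law of Xs C' + h_J(Xs, Ws). *)

Set Implicit Arguments.
Unset Strict Implicit.
Unset Printing Implicit Defensive.

Import Order.TTheory GRing.Theory Num.Theory.
Local Open Scope classical_set_scope.
Local Open Scope ring_scope.

Section lebesgue_integrals.
Variable R : realType.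
Local Notation leb := (lebesgue_measure (R := R)).
Local Notation I01 := (`]0%R, 1%R[%classic : set R).

Lemma lebesgue_measure_preimage_ocitv (phi : R -> R) :
  measurable_fun setT phi ->
  (forall X, ocitv X -> leb (phi @^-1` X) = leb X) ->
  forall A, measurable A -> leb (phi @^-1` A) = leb A.
Proof.
move=> mphi hphi A mA.
rewrite -[LHS]/(pushforward leb (phi : R -> measurableTypeR R) A).
by apply: esym; apply: lebesgue_measure_unique => // X /hphi.
Qed.

Lemma lebesgue_measure_shift (c : R) A : measurable A ->
  leb ((fun x => x + c) @^-1` A) = leb A.
Proof.
apply: lebesgue_measure_preimage_ocitv => [|_ [[a b]] _ <-].
  exact: measurable_funD.
rewrite [X in leb X](_ : _ = `](a - c), (b - c)]%classic); last first.
  by apply/seteqP; split => x /=; rewrite !in_itv /= => /andP[? ?];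
    apply/andP; split; lra.
rewrite !lebesgue_measure_itv /= !lte_fin ltrD2r.
by case: ifP => // _; congr (_%:E); lra.
Qed.

Lemma lebesgue_measure_reflect (c : R) A : measurable A ->
  leb ((fun x => c - x) @^-1` A) = leb A.
Proof.
apply: lebesgue_measure_preimage_ocitv => [|_ [[a b]] _ <-].
  exact: measurable_funB.
rewrite [X in leb X](_ : _ = `[(c - b), (c - a)[%classic); last first.
  by apply/seteqP; split => x /=; rewrite !in_itv /= => /andP[? ?];
    apply/andP; split; lra.
rewrite !lebesgue_measure_itv /= !lte_fin ltrD2l ltrN2.
by case: ifP => // _; congr (_%:E); lra.
Qed.

Lemma ge0_integral_measure_preserving
    (phi : measurableTypeR R -> measurableTypeR R)
    (f : measurableTypeR R -> \bar R) :
  measurable_fun setT phi ->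
  (forall A, measurable A -> leb (phi @^-1` A) = leb A) ->
  measurable_fun setT f -> (forall x, (0 <= f x)%E) ->
  (\int[leb]_x f (phi x) = \int[leb]_x f x)%E.
Proof.
move=> mphi hphi mf f0.
have := ge0_integral_pushforward mphi leb measurableT mf (fun y _ => f0 y).
rewrite preimage_setT => <-.
by apply: eq_measure_integral => A mA _; exact: hphi.
Qed.

Lemma ge0_integral_shift (c : R) (f : R -> \bar R) :
  measurable_fun setT f -> (forall x, (0 <= f x)%E) ->
  (\int[leb]_x f (x + c)%R = \int[leb]_x f x)%E.
Proof.
apply: ge0_integral_measure_preserving; first exact: measurable_funD.
exact: lebesgue_measure_shift.
Qed.

Lemma ge0_integral_reflect (c : R) (f : R -> \bar R) :
  measurable_fun setT f -> (forall x, (0 <= f x)%E) ->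
  (\int[leb]_x f (c - x)%R = \int[leb]_x f x)%E.
Proof.
apply: ge0_integral_measure_preserving; first exact: measurable_funB.
exact: lebesgue_measure_reflect.
Qed.

Lemma integral_vanishing_outside (D : set R) (f : R -> \bar R) :
  (forall x, ~ D x -> f x = 0%E) ->
  (\int[leb]_(x in D) f x = \int[leb]_x f x)%E.
Proof.
move=> f0; rewrite integral_mkcond; apply: eq_integral => x _.
by rewrite /patch; case: ifPn => // /negP; rewrite inE => /f0 ->.
Qed.

Lemma eq_integral_setD1 (D : set R) (r : R) (f g : R -> \bar R) :
  measurable D -> measurable_fun D f -> measurable_fun D g ->
  {in D `\ r, f =1 g} -> (\int[leb]_(x in D) f x = \int[leb]_(x in D) g x)%E.
Proof.
move=> mD mf mg fg; have mDr : measurable (D `\ r) by exact: measurableD.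
rewrite -[LHS](integral_setD1 (r := r)) //; last exact: measurable_funS mf.
rewrite -[RHS](integral_setD1 (r := r)) //; last exact: measurable_funS mg.
exact: eq_integral.
Qed.

Lemma integral01_indic_itv (a b : R) : 0 <= a -> a <= b -> b <= 1 ->
  (\int[leb]_(v in I01) (\1_(`]a, b[%classic : set R) v)%:E = (b - a)%:E)%E.
Proof.
move=> a0 ab b1; rewrite integral_indic // setIidl; last first.
  by move=> x /=; rewrite !in_itv /= => /andP[? ?]; apply/andP; split; lra.
apply: eq_trans (lebesgue_measure_itv `]a, b[%O) _; rewrite /= lte_fin.
have [_|ba] := ltP a b; first by rewrite EFinD.
have -> : b = a by lra.
by rewrite subrr.
Qed.

Definition integral2 (G : R -> R -> \bar R) : \bar R :=
  (\int[leb]_x \int[leb]_y G x y)%E.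

Lemma measurable_fun_comp2 d (T : measurableType d) (G : R -> R -> \bar R)
    (a b : T -> R) :
  measurable_fun setT (fun p : R * R => G p.1 p.2) ->
  measurable_fun setT a -> measurable_fun setT b ->
  measurable_fun setT (fun t => G (a t) (b t)).
Proof. by move=> mG ma mb; exact: measurableT_comp mG (measurable_fun_pair ma mb). Qed.

Section nonneg_integral2.
Variable G : R -> R -> \bar R.
Hypothesis mG : measurable_fun setT (fun p : R * R => G p.1 p.2).
Hypothesis G0 : forall x y, (0 <= G x y)%E.

Lemma measurable_fun_integral2_inner :
  measurable_fun setT (fun x => \int[leb]_y G x y)%E.
Proof.
exact: (measurable_fun_fubini_tonelli_F (m2 := leb) _ mG (fun p => G0 p.1 p.2)).
Qed.

Lemma integral2_swap : integral2 G = integral2 (fun y x => G x y).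
Proof.
exact: (fubini_tonelli (m1 := leb) (m2 := leb) _ mG (fun p => G0 p.1 p.2)).
Qed.

Lemma integral2_prod : integral2 G = (\int[leb \x leb]_p G p.1 p.2)%E.
Proof.
by rewrite (fubini_tonelli1 (m1 := leb) (m2 := leb) _ mG (fun p => G0 p.1 p.2)).
Qed.

Lemma integral2_scale (k : R) : 0 <= k ->
  integral2 (fun x y => k%:E * G x y)%E = (k%:E * integral2 G)%E.
Proof.
move=> k0; rewrite /integral2 -ge0_integralZl //; last first.
- by move=> x _; exact: integral_ge0.
- exact: measurable_fun_integral2_inner.
apply: eq_integral => x _; rewrite ge0_integralZl //.
by apply: (measurable_fun_comp2 mG) => //; exact: measurable_cst.
Qed.

End nonneg_integral2.

Lemma integral2_add G1 G2 :
  measurable_fun setT (fun p : R * R => G1 p.1 p.2) -> (forall x y, (0 <= G1 x y)%E) ->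
  measurable_fun setT (fun p : R * R => G2 p.1 p.2) -> (forall x y, (0 <= G2 x y)%E) ->
  integral2 (fun x y => G1 x y + G2 x y)%E = (integral2 G1 + integral2 G2)%E.
Proof.
move=> mG1 G10 mG2 G20.
rewrite !integral2_prod //; last by move=> x y; rewrite adde_ge0.
  exact: ge0_integralD.
exact: emeasurable_funD.
Qed.

Lemma integral2_sum (I : finType) (G : I -> R -> R -> \bar R) :
  (forall k, measurable_fun setT (fun p : R * R => G k p.1 p.2)) ->
  (forall k x y, (0 <= G k x y)%E) ->
  integral2 (fun x y => (\sum_k G k x y)%E) = (\sum_k integral2 (G k))%E.
Proof.
move=> mG G0; rewrite integral2_prod; last 2 first.
- by apply: emeasurable_sum => k; exact: mG.
- by move=> x y; apply: sume_ge0 => k _; exact: G0.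
transitivity (\sum_k \int[leb \x leb]_p G k p.1 p.2)%E.
  by apply: ge0_integral_sum.
by apply: eq_bigr => k _; rewrite integral2_prod.
Qed.

Lemma integral2_shift_reflect (G : R -> R -> \bar R) :
  measurable_fun setT (fun p : R * R => G p.1 p.2) -> (forall x y, (0 <= G x y)%E) ->
  integral2 G = integral2 (fun x w => G (1 - w) (x + (1 - w))).
Proof.
move=> mG G0.
have mGs : measurable_fun setT (fun p : R * R => G p.1 (p.2 + p.1)).
  by apply: (measurable_fun_comp2 mG) => //; exact: measurable_funD.
transitivity (\int[leb]_u \int[leb]_x G u (x + u)%R)%E.
  apply: eq_integral => u _; apply/esym/ge0_integral_shift => //.
  by apply: (measurable_fun_comp2 mG) => //; exact: measurable_cst.
rewrite -(ge0_integral_reflect 1); first last.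
- by move=> u; exact: integral_ge0.
- exact: (measurable_fun_integral2_inner mGs (fun _ _ => G0 _ _)).
rewrite -[LHS]/(integral2 (fun w x => G (1 - w) (x + (1 - w)))) integral2_swap //.
apply: (measurable_fun_comp2 mG); first exact: measurable_funB.
by apply: measurable_funD => //; exact: measurable_funB.
Qed.

Lemma integral2_reflect_reflect (G : R -> R -> \bar R) :
  measurable_fun setT (fun p : R * R => G p.1 p.2) -> (forall x y, (0 <= G x y)%E) ->
  integral2 G = integral2 (fun x w => G (1 - w) (1 - x)).
Proof.
move=> mG G0.
have mGr : measurable_fun setT (fun p : R * R => G p.1 (1 - p.2)).
  by apply: (measurable_fun_comp2 mG) => //; exact: measurable_funB.
transitivity (\int[leb]_u \int[leb]_x G u (1 - x)%R)%E.
  apply: eq_integral => u _; apply/esym/ge0_integral_reflect => //.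
  by apply: (measurable_fun_comp2 mG) => //; exact: measurable_cst.
rewrite -(ge0_integral_reflect 1); first last.
- by move=> u; exact: integral_ge0.
- exact: (measurable_fun_integral2_inner mGr (fun _ _ => G0 _ _)).
rewrite -[LHS]/(integral2 (fun w x => G (1 - w) (1 - x))) integral2_swap //.
by apply: (measurable_fun_comp2 mG); exact: measurable_funB.
Qed.

Definition ordered01 (x y : R) : bool := [&& 0 < x, x < y & y < 1].

Definition on_simplex (G : R -> R -> \bar R) (x y : R) : \bar R :=
  if ordered01 x y then G x y else 0%E.

Lemma ordered01_itv x y : ordered01 x y -> 0 < x < 1 /\ 0 < y < 1.
Proof. by case/and3P=> x0 xy y1; split; apply/andP; split; lra. Qed.

Lemma ordered01_shift_reflect x w : ordered01 (1 - w) (x + (1 - w)) = ordered01 x w.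
Proof. by apply/and3P/and3P => -[? ? ?]; split; lra. Qed.

Lemma ordered01_reflect_reflect x w : ordered01 (1 - w) (1 - x) = ordered01 x w.
Proof. by apply/and3P/and3P => -[? ? ?]; split; lra. Qed.

Lemma measurable_ordered01 : measurable_fun setT (fun p : R * R => ordered01 p.1 p.2).
Proof.
apply: measurable_and; first by apply: measurable_fun_ltr => //; exact: measurable_cst.
apply: measurable_and; first exact: measurable_fun_ltr.
by apply: measurable_fun_ltr => //; exact: measurable_cst.
Qed.

Lemma measurable_on_simplex G :
  measurable_fun setT (fun p : R * R => G p.1 p.2) ->
  measurable_fun setT (fun p : R * R => on_simplex G p.1 p.2).
Proof. by move=> mG; apply: measurable_fun_ifT => //; exact: measurable_ordered01. Qed.

Lemma on_simplex_ge0 G x y :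
  (forall x y, ordered01 x y -> (0 <= G x y)%E) -> (0 <= on_simplex G x y)%E.
Proof. by move=> G0; rewrite /on_simplex; case: ifP => // /G0. Qed.

Lemma on_simplex_outl G x y : ~ (0 < x < 1) -> on_simplex G x y = 0%E.
Proof. by move=> out; rewrite /on_simplex; case: ifP => // /ordered01_itv[]. Qed.

Lemma on_simplex_outr G x y : ~ (0 < y < 1) -> on_simplex G x y = 0%E.
Proof. by move=> out; rewrite /on_simplex; case: ifP => // /ordered01_itv[]. Qed.

Lemma integral2_on_simplex_sum (I : finType) (G : I -> R -> R -> \bar R) :
  (forall k, measurable_fun setT (fun p : R * R => G k p.1 p.2)) ->
  (forall k x y, ordered01 x y -> (0 <= G k x y)%E) ->
  integral2 (on_simplex (fun x y => (\sum_k G k x y)%E)) =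
  (\sum_k integral2 (on_simplex (G k)))%E.
Proof.
move=> mG G0.
transitivity (integral2 (fun x y => (\sum_k on_simplex (G k) x y)%E)).
  congr integral2; apply/funext => x; apply/funext => y.
  by rewrite /on_simplex; case: ifP => //; rewrite big1.
apply: integral2_sum => k.
- exact: measurable_on_simplex.
- by move=> x y; apply: on_simplex_ge0; exact: G0.
Qed.

Lemma minmax_bounds (u1 u2 : R) : 0 < u1 < 1 -> 0 < u2 < 1 ->
  [/\ 0 <= Num.min u1 u2, Num.min u1 u2 <= Num.max u1 u2 & Num.max u1 u2 <= 1].
Proof.
move=> /andP[u10 u11] /andP[u20 u21].
by rewrite le_min ge_min le_max ge_max lexx (ltW u10) (ltW u11) (ltW u20) (ltW u21).
Qed.

(* The diagonal u1 = u2 is null, and off it exactly one of (u1, u2), (u2, u1)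
   lies in the simplex. *)
Lemma integral_square_minmax G :
  measurable_fun setT (fun p : R * R => G p.1 p.2) ->
  (forall x y, ordered01 x y -> (0 <= G x y)%E) ->
  (\int[leb]_(u1 in I01) \int[leb]_(u2 in I01) G (Num.min u1 u2) (Num.max u1 u2))%E =
  (integral2 (on_simplex G) + integral2 (on_simplex G))%E.
Proof.
move=> mG G0; set S := on_simplex G.
have mS := measurable_on_simplex mG.
have S0 x y : (0 <= S x y)%E by exact: on_simplex_ge0.
have mSt : measurable_fun setT (fun p : R * R => S p.2 p.1).
  exact: measurable_fun_comp2 mS measurable_snd measurable_fst.
transitivity (integral2 (fun u1 u2 => S u1 u2 + S u2 u1)%E); last first.
  by rewrite (@integral2_add S (fun x y => S y x)) // -(@integral2_swap S).
rewrite /integral2 -(@integral_vanishing_outside I01) => [|u1 /= u1I]; last first.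
  transitivity (\int[leb]_u2 (cst 0%E u2))%E; last exact: integral0.
  by apply: eq_integral => u2 _; rewrite /S on_simplex_outl // on_simplex_outr // adde0.
apply: eq_integral => u1; rewrite inE /= in_itv /= => /andP[u10 u11].
rewrite -(@integral_vanishing_outside I01) => [|u2 /= u2I]; last first.
  by rewrite /S on_simplex_outr // on_simplex_outl // adde0.
apply: (@eq_integral_setD1 _ u1).
- exact: measurable_itv.
- apply: measurable_funTS; apply: (measurable_fun_comp2 mG).
  + by apply: measurable_minr => //; exact: measurable_cst.
  + by apply: measurable_maxr => //; exact: measurable_cst.
- apply: measurable_funTS; apply: emeasurable_funD.
  + by apply: (measurable_fun_comp2 mS) => //; exact: measurable_cst.
  + by apply: (measurable_fun_comp2 mS) => //; exact: measurable_cst.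
move=> u2; rewrite inE /= in_itv /= => -[/andP[u20 u21] u2u1].
rewrite /S /on_simplex /ordered01.
have [_|_|u12] := ltgtP u1 u2; last by case: u2u1.
- by rewrite u10 u21 andbF adde0.
- by rewrite u20 u11 andbF add0e.
Qed.

End lebesgue_integrals.

Lemma integral_prob_cst d (T : measurableType d) (R : realType)
    (P : probability T R) (e : \bar R) :
  (\int[P]_x e = e)%E.
Proof. by rewrite integral_cst // [X in (_ * X)%E]probability_setT mule1. Qed.

Lemma measurable_ind (R : realType) d (T : measurableType d) (f : T -> bool) :
  measurable_fun setT f -> measurable_fun setT (fun t => ind R (f t)).
Proof. by move=> mf; exact: measurable_fun_ifT. Qed.

Ltac solve_measurable := repeat first
  [ apply: measurable_funB | apply: measurable_funD | apply: measurable_funM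
  | apply: measurable_ind | apply: measurable_and | apply: measurable_fun_ltr
  | exact: measurable_cst | exact: measurable_fst | exact: measurable_snd
  | exact: measurable_id ].

Section two_point_spacings.
Variable R : realType.
Local Notation leb := (lebesgue_measure (R := R)).
Local Notation I01 := (`]0%R, 1%R[%classic : set R).

Definition spacing (k : 'I_3) (x y : R) : R :=
  match val k with
  | O => x
  | S O => y - x
  | _ => 1 - y
  end.

Definition gap (k : 'I_3) (m M : R) : set R :=
  match val k with
  | O => `]0, m[%classic
  | S O => `]m, M[%classic
  | _ => `]M, 1[%classic
  end.

Definition copy_weight (m M v : R) : R :=
  m * ind R (v < m) + (M - m) * ind R ((m < v) && (v < M)) + (1 - M) * ind R (M < v).

Lemma spacing_ge0 (k : 'I_3) (x y : R) :
  0 <= x -> x <= y -> y <= 1 -> 0 <= spacing k x y.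
Proof. by case: k => -[|[|[|i]]] Hi //; rewrite /spacing /=; lra. Qed.

Lemma measurable_spacing (k : 'I_3) :
  measurable_fun setT (fun p : R * R => spacing k p.1 p.2).
Proof. by case: k => -[|[|[|i]]] Hi //; rewrite /spacing /=; solve_measurable. Qed.

Lemma measurable_h (j : 'I_3) : measurable_fun setT (fun p : R * R => h j p.1 p.2).
Proof. by case: j => -[|[|[|i]]] Hi //; rewrite /h /=; solve_measurable. Qed.

Lemma measurable_gap (k : 'I_3) (m M : R) : measurable (gap k m M).
Proof. by case: k => -[|[|[|i]]] Hi //; exact: measurable_itv. Qed.

Lemma integral01_indic_gap (k : 'I_3) (m M : R) :
  0 <= m -> m <= M -> M <= 1 ->
  (\int[leb]_(v in I01) (\1_(gap k m M) v)%:E = (spacing k m M)%:E)%E.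
Proof.
move=> m0 mM M1; case: k => -[|[|[|i]]] Hi //; rewrite /gap /spacing /=.
- by rewrite integral01_indic_itv // ?subr0 //; lra.
- exact: integral01_indic_itv.
- by rewrite integral01_indic_itv //; lra.
Qed.

Lemma rhs1_copy_weight (u1 u2 v c1 c2 c3 : R) :
  let m := Num.min u1 u2 in let M := Num.max u1 u2 in
  rhs1 u1 u2 v c1 c2 c3 =
  copy_weight m M v * (if v < m then c1 else if v < M then c2 else c3) + h ord0 m M.
Proof.
move=> m M; have mM : m <= M by rewrite ge_min le_max lexx.
rewrite /rhs1 /copy_weight /h /= -/m -/M.
have [vm|mv] := ltP v m.
  by rewrite (lt_gtF vm) (lt_gtF (lt_le_trans vm mM)) /ind /=; ring.
have [vM|Mv] := ltP v M.
  by rewrite (lt_gtF vM) /ind andbT; case: (ltP m v) => _; ring.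
by case: (ltP M v) => _; rewrite /ind andbF; ring.
Qed.

Lemma copy_weight_gaps (F : R -> \bar R) (m M v : R) :
  m <= M -> 0 < v < 1 -> v != m -> v != M ->
  F (copy_weight m M v) = (\sum_(k < 3) (\1_(gap k m M) v)%:E * F (spacing k m M))%E.
Proof.
move=> mM /andP[v0 v1] vm vM.
rewrite !big_ord_recr big_ord0 /= add0e /gap /spacing /copy_weight /= !indicE.
rewrite !mem_setE /= !in_itv /= v0 v1 andbT /=.
have [vm'|mv] := ltP v m.
  rewrite (lt_gtF vm') (lt_gtF (lt_le_trans vm' mM)) /ind /=.
  by rewrite mulr1 !mulr0 !addr0 mul1e !mul0e !adde0.
have {}mv : m < v by rewrite lt_neqAle eq_sym vm.
have [vM'|Mv] := ltP v M.
  rewrite mv (lt_gtF vM') /ind /=.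
  by rewrite !(mul1r, mulr1, mulr0, addr0, add0r, mul1e, mul0e, adde0, add0e).
have {}Mv : M < v by rewrite lt_neqAle eq_sym vM.
rewrite Mv andbF /ind /=.
by rewrite !(mul1r, mulr1, mulr0, addr0, add0r, mul1e, mul0e, adde0, add0e).
Qed.

End two_point_spacings.

Section affine_law.
Variable R : realType.
Variable mu : probability (measurableTypeR R) R.
Variable A : set (measurableTypeR R).
Hypothesis mA : measurable A.
Local Notation leb := (lebesgue_measure (R := R)).
Local Notation I01 := (`]0%R, 1%R[%classic : set R).

Definition affine_prob (a b : R) : \bar R := (\int[mu]_c (\1_A (a * c + b))%:E)%E.

Definition weighted_affine_prob (a b : R -> R -> R) (x y : R) : \bar R :=
  ((a x y)%:E * affine_prob (a x y) (b x y))%E.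

Lemma affine_prob_ge0 (a b : R) : (0 <= affine_prob a b)%E.
Proof. by apply: integral_ge0 => c _; rewrite lee_fin. Qed.

Lemma weighted_affine_prob_ge0 (a b : R -> R -> R) x y :
  0 <= a x y -> (0 <= weighted_affine_prob a b x y)%E.
Proof. by move=> a0; apply: mule_ge0; [rewrite lee_fin | exact: affine_prob_ge0]. Qed.

Lemma measurable_affine_prob :
  measurable_fun setT (fun p : R * R => affine_prob p.1 p.2).
Proof.
apply: (measurable_fun_fubini_tonelli_F (m2 := mu)
  (fun q : (R * R) * R => (\1_A (q.1.1 * q.2 + q.1.2))%:E)); last first.
  by move=> q; rewrite lee_fin.
apply/measurable_EFinP/measurableT_comp; first exact: measurable_indic.
apply: measurable_funD; last exact: measurableT_comp.
apply: measurable_funM; last exact: measurable_snd.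
by apply: measurableT_comp => //; exact: measurableT_comp.
Qed.

Lemma measurable_affine_prob_comp d (T : measurableType d) (a b : T -> R) :
  measurable_fun setT a -> measurable_fun setT b ->
  measurable_fun setT (fun t => affine_prob (a t) (b t)).
Proof.
move=> ma mb.
exact: measurableT_comp measurable_affine_prob (measurable_fun_pair ma mb).
Qed.

Lemma measurable_weighted_affine_prob (a b : R -> R -> R) :
  measurable_fun setT (fun p : R * R => a p.1 p.2) ->
  measurable_fun setT (fun p : R * R => b p.1 p.2) ->
  measurable_fun setT (fun p : R * R => weighted_affine_prob a b p.1 p.2).
Proof.
move=> ma mb; apply: emeasurable_funM; first exact/measurable_EFinP.
exact: measurable_affine_prob_comp.
Qed.

Lemma iterated_integral_rhs1 (u1 u2 v : R) :
  (\int[mu]_c1 \int[mu]_c2 \int[mu]_c3 (\1_A (rhs1 u1 u2 v c1 c2 c3))%:E)%E =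
  affine_prob (copy_weight (Num.min u1 u2) (Num.max u1 u2) v)
              (h ord0 (Num.min u1 u2) (Num.max u1 u2)).
Proof.
(* Which copy is selected depends on v only; the other two integrate a constant. *)
under eq_integral do under eq_integral do under eq_integral do rewrite rhs1_copy_weight.
case: (v < _); first by under eq_integral do rewrite !integral_prob_cst.
case: (v < _); last by rewrite !integral_prob_cst.
by under eq_integral do under eq_integral do rewrite integral_prob_cst;
  rewrite integral_prob_cst.
Qed.

Lemma integral_copy_weight (m M : R) : 0 <= m -> m <= M -> M <= 1 ->
  (\int[leb]_(v in I01) affine_prob (copy_weight m M v) (h ord0 m M))%E =
  (\sum_(k < 3) weighted_affine_prob (spacing k) (h ord0) m M)%E.
Proof.
move=> m0 mM M1; set b := h ord0 m M.
have mI : measurable I01 by exact: measurable_itv.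
have mF : measurable_fun setT (fun v => affine_prob (copy_weight m M v) b).
  apply: measurable_affine_prob_comp; last exact: measurable_cst.
  by rewrite /copy_weight; solve_measurable.
have mG k : measurable_fun setT
    (fun v => (\1_(gap k m M) v)%:E * affine_prob (spacing k m M) b)%E.
  apply: emeasurable_funM => //; apply/measurable_EFinP.
  exact: measurable_indic (measurable_gap k m M).
transitivity (\int[leb]_(v in I01)
    \sum_(k < 3) (\1_(gap k m M) v)%:E * affine_prob (spacing k m M) b)%E.
  have mIM : measurable (I01 `\ M) by exact: measurableD.
  rewrite -[LHS](integral_setD1 (r := M)) //; last exact: measurable_funTS.
  rewrite -[RHS](integral_setD1 (r := M)) //; last first.
    by apply: measurable_funTS; exact: emeasurable_sum.
  apply: (@eq_integral_setD1 _ _ m) => //.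
  - exact: measurable_funTS.
  - by apply: measurable_funTS; exact: emeasurable_sum.
  move=> v; rewrite inE /= in_itv /= => -[[v01 /eqP vM] /eqP vm].
  exact: (copy_weight_gaps (fun a => affine_prob a b)).
rewrite ge0_integral_sum //; last 2 first.
- by move=> k; exact: measurable_funTS (mG k).
- by move=> k v _; apply: mule_ge0; [rewrite lee_fin | exact: affine_prob_ge0].
apply: eq_bigr => k _; rewrite ge0_integralZr //; last exact: affine_prob_ge0.
  by rewrite integral01_indic_gap.
apply/measurable_funTS/measurable_EFinP.
exact: measurable_indic (measurable_gap k m M).
Qed.

End affine_law.

Section fixed_point_laws.
Variable R : realType.
Variable mu : probability (measurableTypeR R) R.
Variable A : set (measurableTypeR R).
Hypothesis mA : measurable A.

(* S_(k+1) F(S_(k+1), h_(j+1)) on the simplex, with F, S_k, h_j as in the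
   header: spacings and shifts are indexed from 0 here. *)
Local Notation term k j := (on_simplex (weighted_affine_prob mu A (spacing k) (h j))).

Lemma measurable_term (k j : 'I_3) :
  measurable_fun setT (fun p : R * R => term k j p.1 p.2).
Proof.
apply: measurable_on_simplex; apply: measurable_weighted_affine_prob => //.
- exact: measurable_spacing.
- exact: measurable_h.
Qed.

Lemma term_ge0 (k j : 'I_3) x y : (0 <= term k j x y)%E.
Proof.
apply: on_simplex_ge0 => {}x {}y /and3P[x0 xy y1].
by apply/weighted_affine_prob_ge0/spacing_ge0; lra.
Qed.

Lemma law_rhs1_simplex :
  law_rhs1 mu A =
  (\sum_(k < 3) integral2 (term k ord0) + \sum_(k < 3) integral2 (term k ord0))%E.
Proof.
have mW k : measurable_fun setT
    (fun p : R * R => weighted_affine_prob mu A (spacing k) (h ord0) p.1 p.2).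
  apply: measurable_weighted_affine_prob => //.
  - exact: measurable_spacing.
  - exact: measurable_h.
rewrite -integral2_on_simplex_sum // => [|k x y /and3P[x0 xy y1]]; last first.
  by apply/weighted_affine_prob_ge0/spacing_ge0; lra.
rewrite -integral_square_minmax; first last.
- by move=> x y /and3P[x0 xy y1]; apply: sume_ge0 => k _;
    apply/weighted_affine_prob_ge0/spacing_ge0; lra.
- exact: emeasurable_sum.
rewrite /law_rhs1 /Eunif; apply: eq_integral => u1; rewrite inE /= in_itv /= => u1I.
apply: eq_integral => u2; rewrite inE /= in_itv /= => u2I.
under eq_integral do rewrite iterated_integral_rhs1.
by have [] := minmax_bounds u1I u2I; exact: integral_copy_weight.
Qed.

Lemma sum_integral2_term_swap :
  (\sum_(k < 3) integral2 (term k ord0) = \sum_(k < 3) integral2 (term ord0 k))%E.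
Proof.
apply: eq_bigr => k _.
case: k => -[|[|[|i]]] Hi; last by exfalso; move: Hi; rewrite !ltnS ltn0.
- by have -> : Ordinal Hi = ord0 :> 'I_3 by exact: val_inj.
- rewrite (integral2_shift_reflect (measurable_term _ _) (@term_ge0 _ _)).
  congr integral2; apply/funext => x; apply/funext => w.
  rewrite /on_simplex ordered01_shift_reflect; case: ifP => // _.
  rewrite /weighted_affine_prob /spacing /h /=.
  by congr (_%:E * affine_prob mu A _ _)%E; ring.
- rewrite (integral2_reflect_reflect (measurable_term _ _) (@term_ge0 _ _)).
  congr integral2; apply/funext => x; apply/funext => w.
  rewrite /on_simplex ordered01_reflect_reflect; case: ifP => // _.
  rewrite /weighted_affine_prob /spacing /h /=.
  by congr (_%:E * affine_prob mu A _ _)%E; ring.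
Qed.

Lemma fXW_ordered01 (x w : R) : fXW x w = 6 * x * ind R (ordered01 x w).
Proof. by rewrite /fXW /ordered01 andbA. Qed.

Lemma law_rhs2_simplex :
  law_rhs2 mu A = (\sum_(j < 3) (integral2 (term ord0 j) + integral2 (term ord0 j)))%E.
Proof.
rewrite /law_rhs2; apply: eq_bigr => j _.
transitivity
  ((3^-1)%:E * integral2 (fun x w => 3%:E * (term ord0 j x w + term ord0 j x w)))%E.
  rewrite /integral2; congr (_ * _)%E.
  apply: eq_integral => x _; apply: eq_integral => w _.
  rewrite fXW_ordered01 /on_simplex /weighted_affine_prob /spacing /ind /=.
  case: ifP => [/and3P[x0 _ _]|_]; last by rewrite mulr0 mul0e adde0 mule0.
  rewrite -ge0_muleDl ?lee_fin ?ltW // -EFinD muleA -EFinM.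
  by congr (_%:E * _)%E; ring.
rewrite integral2_scale //; last 2 first.
- by apply: emeasurable_funD; exact: measurable_term.
- by move=> x y; rewrite adde_ge0 ?term_ge0.
rewrite (integral2_add (measurable_term _ _) (@term_ge0 _ _)
                       (measurable_term _ _) (@term_ge0 _ _)).
by rewrite muleA -EFinM mulVf // mul1e.
Qed.

End fixed_point_laws.

Theorem lemma9p1 (R : realType) (mu : probability (measurableTypeR R) R) :
  (forall A : set (measurableTypeR R), measurable A -> mu A = law_rhs1 mu A) ->
  forall A : set (measurableTypeR R), measurable A -> mu A = law_rhs2 mu A.
Proof.
move=> fixed_point A mA.
rewrite fixed_point // (law_rhs1_simplex mu mA) (sum_integral2_term_swap mu mA).
by rewrite (law_rhs2_simplex mu mA) [RHS]big_split.
Qed.
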